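(* Let $G$ be an abelian group (written multiplicatively) and let $A$ and $B$ be nonempty finite subsets of $G$. Assume that for every nontrivial finite subgroup $H$ of $G$ and all elements $a,b\in G$ we have $|aH\cap A|+|bH\cap B|\leq |H|+1$. Then for all nonempty subsets $S\subset A$ and $T\subset B$, we have $|ST|\geq |S|+|T|-1$.
   Context: For subsets $S,T$ of $G$, $ST=\{st: s\in S, t\in T\}$. *)

(* An abelian group is a zmodType (additive notation);
   finite subsets are finmap's {fset G}. *)
From HB Require Import structures.
From mathcomp Require Import all_boot all_order all_algebra.
From mathcomp Require Import finmap.
Set Implicit Arguments. Unset Strict Implicit. Unset Printing Implicit Defensive.
Import GRing.Theory.
Local Open Scope fset_scope.
Local Open Scope ring_scope.

Definition sumset (G : zmodType) (S T : {fset G}) : {fset G} :=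
  [fset s + t | s in S, t in T].

Definition is_fsubgroup (G : zmodType) (H : {fset G}) : Prop :=
  0 \in H /\ (forall x y, x \in H -> y \in H -> x - y \in H).

Definition fcoset (G : zmodType) (a : G) (H : {fset G}) : {fset G} :=
  [fset a + h | h in H].

From HB Require Import structures.
From mathcomp Require Import all_boot all_order all_algebra.
From mathcomp Require Import finmap zify.

Set Implicit Arguments. Unset Strict Implicit. Unset Printing Implicit Defensive.
Import GRing.Theory.
Local Open Scope fset_scope.
Local Open Scope ring_scope.

(* Kneser's theorem gives |S + T| >= |S + H| + |T + H| - |H| for the stabiliser H of
   S + T, which is the claim when H is trivial.  Otherwise, for s in S the coset s + H
   contains at least |H| - |(S + H) \ S| points of S, hence of A, and likewise for t in T
   and B; the hypothesis applied to H, s and t then bounds |S + H| + |T + H| - |H| below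
   by |S| + |T| - 1.

   Kneser's theorem is proved following DeVos.  If it fails for A and B, which may be
   replaced by A + H and B + H, every point of C = A + B lies in the sumset C_e of an
   e-transform of (A, B) that changes B.  By induction on the number of H-cosets of B,
   each C_e has a stabiliser K_e with |C \ C_e| + |H| < |K_e|, and merging the C_e one
   at a time, starting from the one of least stabiliser, shows that C has a period
   larger than H. *)

Lemma leq_dvdn_ltn_add d m n : (d %| m)%N -> (d %| n)%N -> (m < n + d)%N -> (m <= n)%N.
Proof.
move=> /dvdnP[p ->] /dvdnP[q ->]; case: d => [|d]; first by rewrite !muln0.
by rewrite -mulSnr ltn_pmul2r // ltnS leq_pmul2r.
Qed.

Section Kneser.
Variable G : zmodType.
Implicit Types (X Y C D H K : {fset G}) (a b c d x y z : G).

(** * Sumsets and translates *)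

Lemma sumsetP X Y z :
  reflect (exists2 x, x \in X & exists2 y, y \in Y & z = x + y) (z \in sumset X Y).
Proof. exact: imfset2P. Qed.

Lemma mem_sumset X Y x y : x \in X -> y \in Y -> x + y \in sumset X Y.
Proof. by move=> xX yY; apply/sumsetP; exists x => //; exists y. Qed.

Lemma sumsetS X X' Y Y' : X `<=` X' -> Y `<=` Y' -> sumset X Y `<=` sumset X' Y'.
Proof.
move=> /fsubsetP sXX' /fsubsetP sYY'; apply/fsubsetP => z /sumsetP[x xX [y yY ->]].
by rewrite mem_sumset ?sXX' ?sYY'.
Qed.

Lemma sumset0 X : sumset fset0 X = fset0.
Proof. by apply/fsetP => z; rewrite in_fset0; apply/sumsetP => -[x]. Qed.

Lemma sumset_neq0 X Y : X != fset0 -> Y != fset0 -> sumset X Y != fset0.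
Proof.
by move=> /fset0Pn[x xX] /fset0Pn[y yY]; apply/fset0Pn; exists (x + y); apply: mem_sumset.
Qed.

Lemma in_fcoset a X z : (z \in fcoset a X) = (z - a \in X).
Proof.
apply/imfsetP/idP => [[x xX ->]|zaX]; first by rewrite addrC addKr.
by exists (z - a) => //; rewrite addrC subrK.
Qed.

Lemma card_fcoset a X : #|` fcoset a X| = #|` X|.
Proof. by rewrite card_imfset //; apply: addrI. Qed.

Lemma card_sub_fcoset a X Y : X `<=` fcoset a Y -> (#|` X| <= #|` Y|)%N.
Proof. by move/fsubset_leq_card; rewrite card_fcoset. Qed.

Lemma fcoset0 X : fcoset 0 X = X.
Proof. by apply/fsetP => z; rewrite in_fcoset subr0. Qed.

Lemma fcosetD a b X : fcoset (a + b) X = fcoset a (fcoset b X).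
Proof. by apply/fsetP => z; rewrite !in_fcoset opprD addrA. Qed.

Lemma fcosetS a X Y : X `<=` Y -> fcoset a X `<=` fcoset a Y.
Proof. by move=> /fsubsetP sXY; apply/fsubsetP => z; rewrite !in_fcoset => /sXY. Qed.

Lemma fcosetI a X Y : fcoset a (X `&` Y) = fcoset a X `&` fcoset a Y.
Proof. by apply/fsetP => z; rewrite !(in_fsetI, in_fcoset). Qed.

Lemma fcosetK a X : fcoset a (fcoset (- a) X) = X.
Proof. by rewrite -fcosetD subrr fcoset0. Qed.

Lemma fcosetNK a X : fcoset (- a) (fcoset a X) = X.
Proof. by rewrite -fcosetD addNr fcoset0. Qed.

Section Subgroups.
Variables (K : {fset G}) (sK : is_fsubgroup K).

Lemma fsubgroup0 : 0 \in K.
Proof. by case: sK. Qed.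

Lemma fsubgroupB x y : x \in K -> y \in K -> x - y \in K.
Proof. by case: sK => _; apply. Qed.

Lemma fsubgroupN x : x \in K -> - x \in K.
Proof. by move=> xK; rewrite -sub0r fsubgroupB ?fsubgroup0. Qed.

Lemma fsubgroupD x y : x \in K -> y \in K -> x + y \in K.
Proof. by move=> xK yK; rewrite -[y]opprK fsubgroupB ?fsubgroupN. Qed.

Lemma fsubgroup_card_gt0 : (0 < #|` K|)%N.
Proof. by rewrite cardfs_gt0; apply/fset0Pn; exists 0; apply: fsubgroup0. Qed.

End Subgroups.

Lemma fsubgroupI K1 K2 : is_fsubgroup K1 -> is_fsubgroup K2 -> is_fsubgroup (K1 `&` K2).
Proof.
move=> sK1 sK2; split; first by rewrite in_fsetI !fsubgroup0.
by move=> x y; rewrite !in_fsetI => /andP[xK1 xK2] /andP[yK1 yK2]; rewrite !fsubgroupB.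
Qed.

Lemma card_fcosetI_le a b K1 K2 : is_fsubgroup K1 -> is_fsubgroup K2 ->
  (#|` fcoset a K1 `&` fcoset b K2| <= #|` K1 `&` K2|)%N.
Proof.
move=> sK1 sK2; have [->|[z0 z0I]] := fset_0Vmem (fcoset a K1 `&` fcoset b K2).
  by rewrite cardfs0.
apply: (card_sub_fcoset (a := z0)); apply/fsubsetP => z zI.
move: z0I zI; rewrite !(in_fsetI, in_fcoset) => /andP[z0K1 z0K2] /andP[zK1 zK2].
have shift u : z - z0 = (z - u) - (z0 - u) by rewrite opprB subrKA.
by rewrite {1}(shift a) (shift b) (fsubgroupB sK1 zK1 z0K1) (fsubgroupB sK2 zK2 z0K2).
Qed.

(** * Periodic sets and stabilisers *)

Definition periodic K X := forall x k, x \in X -> k \in K -> x + k \in X.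

Lemma periodicS K K' X : K' `<=` K -> periodic K X -> periodic K' X.
Proof. by move=> /fsubsetP sK'K pX x k xX /sK'K; apply: pX. Qed.

Lemma periodicK K X x k : is_fsubgroup K -> periodic K X -> x + k \in X -> k \in K -> x \in X.
Proof. by move=> sK pX xkX kK; rewrite -(addrK k x) pX ?fsubgroupN. Qed.

Lemma periodicU K X Y : periodic K X -> periodic K Y -> periodic K (X `|` Y).
Proof.
by move=> pX pY x k; rewrite !in_fsetU => /orP[xX|xY] kK; [rewrite pX | rewrite pY ?orbT].
Qed.

Lemma periodicD K X Y : is_fsubgroup K -> periodic K X -> periodic K Y -> periodic K (X `\` Y).
Proof.
move=> sK pX pY x k; rewrite !in_fsetD => /andP[xNY xX] kK; rewrite pX // andbT.
by apply: contra xNY => xkY; apply: periodicK xkY kK.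
Qed.

Lemma periodic_sumsetl K X Y : periodic K X -> periodic K (sumset X Y).
Proof. by move=> pX z k /sumsetP[x xX [y yY ->]] kK; rewrite addrAC mem_sumset ?pX. Qed.

Lemma periodic_sumsetr K X Y : periodic K Y -> periodic K (sumset X Y).
Proof. by move=> pY z k /sumsetP[x xX [y yY ->]] kK; rewrite -addrA mem_sumset ?pY. Qed.

Lemma periodicI K X Y : periodic K X -> periodic K Y -> periodic K (X `&` Y).
Proof. by move=> pX pY x k; rewrite !in_fsetI => /andP[xX xY] kK; rewrite pX ?pY. Qed.

Lemma periodic_fsubgroup K : is_fsubgroup K -> periodic K K.
Proof. by move=> sK x k; apply: fsubgroupD. Qed.

Lemma periodic_fcoset a K X : periodic K X -> periodic K (fcoset a X).
Proof. by move=> pX x k; rewrite !in_fcoset => xaX kK; rewrite addrAC pX. Qed.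

Lemma periodic_sumsetK K X : is_fsubgroup K -> periodic K (sumset X K).
Proof. by move=> sK; apply/periodic_sumsetr/periodic_fsubgroup. Qed.

Lemma fsubset_sumsetK K X : is_fsubgroup K -> X `<=` sumset X K.
Proof. by move=> sK; apply/fsubsetP => x xX; rewrite -[x]addr0 mem_sumset ?fsubgroup0. Qed.

Lemma sumset_sumsetK H X Y : is_fsubgroup H -> periodic H (sumset X Y) ->
  sumset (sumset X H) (sumset Y H) = sumset X Y.
Proof.
move=> sH pH; apply/eqP; rewrite eqEfsubset andbC.
rewrite (sumsetS (fsubset_sumsetK X sH) (fsubset_sumsetK Y sH)) /=.
apply/fsubsetP => z /sumsetP[_ /sumsetP[x xX [h hH ->]] [_ /sumsetP[y yY [h' h'H ->]] ->]].
by rewrite addrACA pH ?mem_sumset ?fsubgroupD.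
Qed.

Lemma fcoset_sub_periodic a K X : is_fsubgroup K -> periodic K X -> a \in X -> fcoset a K `<=` X.
Proof.
move=> sK pX aX; apply/fsubsetP => z; rewrite in_fcoset => zaK.
by rewrite -(subrK a z) addrC pX.
Qed.

Lemma card_periodic_fcoset K X x : is_fsubgroup K -> periodic K X -> x \in X ->
  #|` X| = (#|` K| + #|` X `\` fcoset x K|)%N.
Proof.
move=> sK pX xX.
by rewrite -(cardfsID (fcoset x K) X) (fsetIidPr (fcoset_sub_periodic sK pX xX)) card_fcoset.
Qed.

Lemma periodic_ind K (P : {fset G} -> Prop) : is_fsubgroup K -> P fset0 ->
    (forall x X, periodic K X -> x \in X -> P (X `\` fcoset x K) -> P X) ->
  forall X, periodic K X -> P X.
Proof.
move=> sK P0 PS X; elim: {X}_.+1 {-2}X (ltnSn #|` X|) => // m IHm X ltXm pX.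
have [->|[x xX]] := fset_0Vmem X; first exact: P0.
have pXx : periodic K (X `\` fcoset x K).
  by apply: periodicD => //; apply/periodic_fcoset/periodic_fsubgroup.
apply: (PS x) => //; apply: IHm pXx.
by have := fsubgroup_card_gt0 sK; move: ltXm; rewrite (card_periodic_fcoset sK pX xX); lia.
Qed.

Lemma dvdn_card_periodic K X : is_fsubgroup K -> periodic K X -> (#|` K| %| #|` X|)%N.
Proof.
move=> sK; move: X; apply: (periodic_ind (P := fun X => #|` K| %| #|` X|)%N) => // x X pX xX dvdKX.
by rewrite (card_periodic_fcoset sK pX xX) dvdn_addr.
Qed.

Lemma card_sumset_periodic H K X : is_fsubgroup H -> is_fsubgroup K -> H `<=` K ->
  periodic H X -> (#|` sumset X K| * #|` H| <= #|` X| * #|` K|)%N.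
Proof.
move=> sH sK sHK; move: X.
apply: (periodic_ind (P := fun X => #|` sumset X K| * #|` H| <= #|` X| * #|` K|)%N) => //.
  by rewrite sumset0 cardfs0.
move=> x X pX xX IH.
have XK_sub : sumset X K `<=` fcoset x K `|` sumset (X `\` fcoset x H) K.
  apply/fsubsetP => _ /sumsetP[y yX [k kK ->]]; rewrite in_fsetU.
  have [yXx|yNXx] := boolP (y \in X `\` fcoset x H); first by rewrite mem_sumset ?orbT.
  move: yNXx; rewrite in_fsetD yX andbT negbK in_fcoset => yxH.
  by rewrite in_fcoset addrAC fsubgroupD // (fsubsetP sHK).
have := fsubset_leq_card XK_sub; have := cardfsUI (fcoset x K) (sumset (X `\` fcoset x H) K).
rewrite card_fcoset (card_periodic_fcoset sH pX xX) => cardU le_XK.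
apply: leq_trans (_ : (#|` K| + #|` sumset (X `\` fcoset x H) K|) * #|` H| <= _)%N.
  by rewrite leq_mul2r; apply/orP; right; lia.
by rewrite mulnDl mulnDl mulnC leq_add2l.
Qed.

(* [stab fset0] is empty, not a subgroup: hence the [C != fset0] hypotheses below. *)
Definition stab C : {fset G} :=
  [fset d in [fset c1 - c2 | c1 in C, c2 in C] | fcoset d C == C].

Lemma stabP C d : C != fset0 -> reflect (fcoset d C = C) (d \in stab C).
Proof.
move=> C0; rewrite !inE /=; apply: (iffP andP) => [[_ /eqP //]|dC].
split; last exact/eqP.
have [c cC] := fset0Pn _ C0.
apply/imfset2P; exists (d + c); first by rewrite -dC in_fcoset addrC addKr.
by exists c => //; rewrite addrK.
Qed.

Lemma fcoset_eq_of_sub d C : fcoset d C `<=` C -> fcoset d C = C.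
Proof. by move=> sdC; apply/eqP; rewrite eqEfcard sdC card_fcoset leqnn. Qed.

Lemma stab_fsubgroup C : C != fset0 -> is_fsubgroup (stab C).
Proof.
move=> C0; split; first by apply/stabP; rewrite ?fcoset0.
move=> d d' /stabP-/(_ C0) dC /stabP-/(_ C0) d'C; apply/stabP => //.
by rewrite fcosetD -{1}d'C fcosetNK.
Qed.

Lemma periodic_stab C : C != fset0 -> periodic (stab C) C.
Proof. by move=> C0 x d xC /stabP-/(_ C0) dC; rewrite -dC in_fcoset addrK. Qed.

Lemma sub_stab K C : C != fset0 -> periodic K C -> K `<=` stab C.
Proof.
move=> C0 pC; apply/fsubsetP => k kK; apply/stabP/fcoset_eq_of_sub => //.
by apply/fsubsetP => z; rewrite in_fcoset => zkC; rewrite -(subrK k z) pC.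
Qed.

(** * Merging periodic subsets *)

Lemma card_sumset_fcoset_ge X Y a b K1 K2 : is_fsubgroup K1 -> is_fsubgroup K2 ->
  X `<=` fcoset a K1 -> Y `<=` fcoset b K2 -> X != fset0 -> Y != fset0 ->
  (#|` X| + #|` Y| <= #|` sumset X Y| + #|` K1 `&` K2|)%N.
Proof.
move=> sK1 sK2 sXa sYb /fset0Pn[x0 x0X] /fset0Pn[y0 y0Y].
have sub : fcoset y0 X `|` fcoset x0 Y `<=` sumset X Y.
  apply/fsubsetP => z; rewrite in_fsetU !in_fcoset => /orP[zX|zY].
    by rewrite -(subrK y0 z) mem_sumset.
  by rewrite -(subrKC x0 z) mem_sumset.
have meet : (#|` fcoset y0 X `&` fcoset x0 Y| <= #|` K1 `&` K2|)%N.
  apply: leq_trans (fsubset_leq_card (fsetISS (fcosetS y0 sXa) (fcosetS x0 sYb))) _.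
  by rewrite -!fcosetD card_fcosetI_le.
have := fsubset_leq_card sub; have := cardfsUI (fcoset y0 X) (fcoset x0 Y).
by rewrite !card_fcoset; lia.
Qed.

Lemma card_fsetD_split C X Y : Y `<=` C ->
  #|` C `\` X| = (#|` C `\` (X `|` Y)| + #|` Y `\` X|)%N.
Proof.
move=> /fsubsetP sYC; rewrite -(cardfsID Y (C `\` X)) fsetDDl addnC.
suff -> : (C `\` X) `&` Y = Y `\` X by [].
by apply/fsetP => z; rewrite !inE -andbA; case: (boolP (z \in Y)) => [/sYC ->|]; rewrite ?andbF.
Qed.

(* In the coset x + (K1 + K2), view the (K1 `&` K2)-cosets as a grid whose rows are
   K1-cosets and whose columns are K2-cosets: C1 is a union of rows avoiding the row of x,
   and C2 a union of columns containing the column of x. *)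
Section Merge.
Variables (C C1 C2 K1 K2 : {fset G}) (x : G).
Hypotheses (sK1 : is_fsubgroup K1) (sK2 : is_fsubgroup K2).
Hypotheses (pC1 : periodic K1 C1) (pC2 : periodic K2 C2).
Hypotheses (sC1C : C1 `<=` C) (sC2C : C2 `<=` C).
Hypotheses (ltC1 : (#|` C `\` C1| < #|` K1|)%N) (ltC2 : (#|` C `\` C2| < #|` K2|)%N).
Hypotheses (leK12 : (#|` K1| <= #|` K2|)%N) (xC2 : x \in C2) (xNC1 : x \notin C1).

Lemma fcosetI_neq0 : fcoset x K2 `&` C1 != fset0.
Proof.
apply/negP => /eqP disj.
have : fcoset x K2 `<=` C `\` C1.
  apply/fsubsetP => z zxK2; rewrite in_fsetD.
  rewrite (fsubsetP sC2C) ?(fsubsetP (fcoset_sub_periodic sK2 pC2 xC2)) // andbT.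
  by apply/negP => zC1; have := in_fset0 z; rewrite -disj in_fsetI zxK2 zC1.
by move/fsubset_leq_card; rewrite card_fcoset; lia.
Qed.

Lemma card_fcosetD_le : (#|` fcoset x K1 `\` C2| <= #|` fcoset x K2 `\` C1|)%N.
Proof.
set M := fcoset x K1 `\` C2; set Y := fcoset x K2 `&` C1; set N := fcoset x K2 `\` C1.
have [->|M0] := eqVneq M fset0; first by rewrite cardfs0.
have sMY : (#|` sumset M Y| <= #|` C `\` C2|)%N.
  apply: (card_sub_fcoset (a := x)); apply/fsubsetP => _ /sumsetP[u uM [v vY ->]].
  move: uM vY; rewrite in_fsetD in_fsetI !in_fcoset => /andP[uNC2 uxK1] /andP[vxK2 vC1].
  rewrite -addrA in_fsetD (fsubsetP sC1C) ?andbT.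
    by apply: contra uNC2 => uvC2; apply: periodicK sK2 pC2 uvC2 vxK2.
  by rewrite addrCA pC1.
have sK12 := fsubgroupI sK1 sK2.
have cardMY : (#|` M| + #|` Y| <= #|` sumset M Y| + #|` K1 `&` K2|)%N.
  exact: card_sumset_fcoset_ge sK1 sK2 (fsubsetDl _ _) (fsubsetIl _ _) M0 fcosetI_neq0.
have cardK2 : (#|` Y| + #|` N| = #|` K2|)%N by rewrite cardfsID card_fcoset.
apply: (leq_dvdn_ltn_add (d := #|` K1 `&` K2|)); last by lia.
  apply: (dvdn_card_periodic sK12); apply: (periodicD sK12).
    by apply: (periodicS (fsubsetIl _ _)); apply/periodic_fcoset/periodic_fsubgroup.
  exact: periodicS (fsubsetIr _ _) pC2.
apply: (dvdn_card_periodic sK12); apply: (periodicD sK12).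
  by apply: (periodicS (fsubsetIr _ _)); apply/periodic_fcoset/periodic_fsubgroup.
exact: periodicS (fsubsetIl _ _) pC1.
Qed.

Lemma card_merge : (#|` K1| <= #|` C2 `\` C1| + #|` K1 `&` K2|)%N.
Proof.
set P := fcoset x K1 `&` C2; set M := fcoset x K1 `\` C2; set N := fcoset x K2 `\` C1.
have cardK1 : (#|` P| + #|` M| = #|` K1|)%N by rewrite cardfsID card_fcoset.
have sPN : P `|` N `<=` C2 `\` C1.
  apply/fsubsetP => z; rewrite in_fsetU !in_fsetD in_fsetI.
  case/orP => [/andP[zxK1 zC2]|/andP[zNC1 zxK2]].
    rewrite zC2 andbT; apply: contra xNC1 => zC1.
    by apply: (periodicK sK1 pC1 (k := z - x)); rewrite ?subrKC // -in_fcoset.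
  by rewrite zNC1 (fsubsetP (fcoset_sub_periodic sK2 pC2 xC2)).
have meet : (#|` P `&` N| <= #|` K1 `&` K2|)%N.
  apply: leq_trans (fsubset_leq_card (fsetISS (fsubsetIl _ _) (fsubsetDl _ _))) _.
  exact: card_fcosetI_le.
have := card_fcosetD_le; rewrite -/M -/N.
have := fsubset_leq_card sPN; have := cardfsUI P N; lia.
Qed.

End Merge.

Section Cover.
Variables (I : choiceType) (E : {fset I}) (Cs Ks : I -> {fset G}) (C : {fset G}) (h : nat).
Hypothesis coverC : forall c, c \in C -> exists2 i, i \in E & c \in Cs i.
Hypothesis fsubgroupKs : forall i, i \in E -> is_fsubgroup (Ks i).
Hypothesis periodicCs : forall i, i \in E -> periodic (Ks i) (Cs i).
Hypothesis subCs : forall i, i \in E -> Cs i `<=` C.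
Hypothesis deficitCs : forall i, i \in E -> (#|` C `\` Cs i| + h < #|` Ks i|)%N.

Lemma periodic_cover_from D K : D `<=` C -> is_fsubgroup K -> periodic K D ->
    (#|` C `\` D| + h < #|` K|)%N -> (forall i, i \in E -> #|` K| <= #|` Ks i|)%N ->
  exists K', [/\ is_fsubgroup K', periodic K' C & (h < #|` K'|)%N].
Proof.
elim: {D}_.+1 {-2}D (ltnSn #|` C `\` D|) K => // m IHm D ltDm K sDC sK pD ltK minK.
have [sCD|/fsubsetPn[c cC cND]] := boolP (C `<=` D).
  have eqDC : D = C by apply/eqP; rewrite eqEfsubset sDC sCD.
  by exists K; rewrite -eqDC; split => //; lia.
have [i iE cCi] := coverC cC.
have ltD : (#|` C `\` D| < #|` K|)%N by lia.
have ltCi : (#|` C `\` Cs i| < #|` Ks i|)%N by have := deficitCs iE; lia.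
have merge := card_merge sK (fsubgroupKs iE) pD (periodicCs iE) sDC (subCs iE) ltD ltCi
  (minK i iE) cCi cND.
have splitD := card_fsetD_split D (subCs iE).
have CiD : (0 < #|` Cs i `\` D|)%N.
  by rewrite cardfs_gt0; apply/fset0Pn; exists c; rewrite in_fsetD cND.
apply: (IHm (D `|` Cs i) _ (K `&` Ks i)); first by lia.
- by rewrite fsubUset sDC subCs.
- exact: fsubgroupI sK (fsubgroupKs iE).
- apply: periodicU; first exact: periodicS (fsubsetIl _ _) pD.
  exact: periodicS (fsubsetIr _ _) (periodicCs iE).
- by lia.
- by move=> j jE; apply: leq_trans (minK j jE); apply/fsubset_leq_card/fsubsetIl.
Qed.

Lemma periodic_cover : C != fset0 ->
  exists K, [/\ is_fsubgroup K, periodic K C & (h < #|` K|)%N].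
Proof.
move=> /fset0Pn[c /coverC[i0 i0E _]].
have exE : exists k, has (fun i => #|` Ks i| == k) E by exists #|` Ks i0|; apply/hasP; exists i0.
(* Start from a least period: [card_merge] needs [#|` K| <= #|` Ks i|] at each merge. *)
have [_ /hasP[i iE /eqP <-] minKi] := ex_minnP exE.
apply: (periodic_cover_from (subCs iE) (fsubgroupKs iE) (periodicCs iE) (deficitCs iE)).
by move=> j jE; apply: minKi; apply/hasP; exists j.
Qed.

End Cover.

(** * The e-transform and Kneser's theorem *)

Definition etransA X Y e := X `|` fcoset e Y.
Definition etransB X Y e := Y `&` fcoset (- e) X.

Definition etrans_shifts X Y : {fset G} :=
  [fset e in [fset a - b | a in X, b in Y] | etransB X Y e != Y].

Lemma in_etransB X Y e y : (y \in etransB X Y e) = (y \in Y) && (y + e \in X).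
Proof. by rewrite in_fsetI in_fcoset opprK. Qed.

Lemma card_etrans X Y e : (#|` etransA X Y e| + #|` etransB X Y e| = #|` X| + #|` Y|)%N.
Proof.
rewrite -(card_fcoset e (etransB X Y e)) /etransA /etransB fcosetI fcosetK fsetIC.
by rewrite cardfsUI card_fcoset.
Qed.

Lemma sumset_etrans_sub X Y e : sumset (etransA X Y e) (etransB X Y e) `<=` sumset X Y.
Proof.
apply/fsubsetP => _ /sumsetP[a aAe [b bBe ->]].
move: aAe bBe; rewrite in_fsetU in_fcoset in_etransB => /orP[aX|aeY] /andP[bY beX].
  exact: mem_sumset.
by rewrite -(subrK e a) addrAC -addrA addrC mem_sumset.
Qed.

Lemma periodic_etransA K X Y e : periodic K X -> periodic K Y -> periodic K (etransA X Y e).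
Proof. by move=> pX pY; apply/periodicU/periodic_fcoset. Qed.

Lemma periodic_etransB K X Y e : periodic K X -> periodic K Y -> periodic K (etransB X Y e).
Proof. by move=> pX pY; apply/periodicI/periodic_fcoset. Qed.

Lemma etrans_shiftsP X Y e : e \in etrans_shifts X Y ->
  [/\ etransA X Y e != fset0, etransB X Y e != fset0 & etransB X Y e `<` Y].
Proof.
rewrite !inE /= => /andP[/imfset2P[a aX [b bY ->]] BeNY]; split.
- by apply/fset0Pn; exists a; rewrite in_fsetU aX.
- by apply/fset0Pn; exists b; rewrite in_etransB bY subrKC.
- by rewrite fproperEneq BeNY fsubsetIl.
Qed.

Lemma etrans_cover X Y c : c \in sumset X Y ->
    (#|` sumset X Y| + #|` stab (sumset X Y)| < #|` X| + #|` Y|)%N ->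
  exists2 e, e \in etrans_shifts X Y & c \in sumset (etransA X Y e) (etransB X Y e).
Proof.
move=> /sumsetP[a aX [b bY ->]] ltXY.
have [/hasP[e eE abe]|/hasPn uncovered] :=
  boolP (has (fun e => a + b \in sumset (etransA X Y e) (etransB X Y e)) (etrans_shifts X Y)).
  by exists e.
have shiftY a' : a' \in X -> etransB X Y (a' - b) = Y.
  move=> a'X; apply/eqP/negPn/negP => BeNY.
  have eE : a' - b \in etrans_shifts X Y.
    by rewrite !inE /= BeNY andbT; apply/imfset2P; exists a' => //; exists b.
  have := uncovered _ eE; rewrite mem_sumset ?in_fsetU ?aX // in_etransB bY.
  by rewrite subrKC.
have XY0 : sumset X Y != fset0 by apply: sumset_neq0; apply/fset0Pn; [exists a | exists b].
have leX : (#|` X| <= #|` sumset X Y|)%N.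
  rewrite -(card_fcoset b X); apply/fsubset_leq_card/fsubsetP => z.
  by rewrite in_fcoset => zbX; rewrite -(subrK b z) mem_sumset.
have leY : (#|` Y| <= #|` stab (sumset X Y)|)%N.
  apply: (card_sub_fcoset (a := b)); apply/fsubsetP => y yY; rewrite in_fcoset.
  apply/stabP/fcoset_eq_of_sub => //; apply/fsubsetP => z.
  rewrite in_fcoset => /sumsetP[a1 a1X [b1 b1Y zE]].
  have a1Y : y + (a1 - b) \in X by move: yY; rewrite -(shiftY a1 a1X) in_etransB => /andP[].
  by rewrite -(subrK (y - b) z) zE addrAC (addrCA a1) mem_sumset.
by move: ltXY; lia.
Qed.

Definition kneser_bound A B : Prop :=
  (#|` sumset A (stab (sumset A B))| + #|` sumset B (stab (sumset A B))|
    <= #|` sumset A B| + #|` stab (sumset A B)|)%N.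

Section KneserStep.
Variable n : nat.
Hypothesis IHn : forall A B, A != fset0 -> B != fset0 ->
  (#|` sumset B (stab (sumset A B))| <= n * #|` stab (sumset A B)|)%N -> kneser_bound A B.
Variables X Y : {fset G}.
Local Notation H := (stab (sumset X Y)).
Local Notation Ce e := (sumset (etransA X Y e) (etransB X Y e)).
Hypotheses (X0 : X != fset0) (Y0 : Y != fset0) (pX : periodic H X) (pY : periodic H Y).
Hypothesis cardY : (#|` Y| <= n.+1 * #|` H|)%N.

Lemma card_etransB_sumset_stab e : e \in etrans_shifts X Y ->
  (#|` sumset (etransB X Y e) (stab (Ce e))| <= n * #|` stab (Ce e)|)%N.
Proof.
move=> /etrans_shiftsP[Ae0 Be0 BeY].
have sH := stab_fsubgroup (sumset_neq0 X0 Y0).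
have sKe := stab_fsubgroup (sumset_neq0 Ae0 Be0).
have pBe : periodic H (etransB X Y e) by apply: periodic_etransB.
have sHKe : H `<=` stab (Ce e).
  by apply/sub_stab/periodic_sumsetl/periodic_etransA; rewrite ?sumset_neq0.
have leBe : (#|` etransB X Y e| <= n * #|` H|)%N.
  apply: leq_dvdn_ltn_add (dvdn_card_periodic sH pBe) (dvdn_mull _ (dvdnn _)) _.
  by rewrite -mulSnr (leq_trans (fproper_ltn_card BeY)).
rewrite -(leq_pmul2r (fsubgroup_card_gt0 sH)).
apply: leq_trans (card_sumset_periodic sH sKe sHKe pBe) _.
by rewrite mulnAC leq_mul2r leBe orbT.
Qed.

Lemma etrans_deficit e : e \in etrans_shifts X Y ->
    (#|` sumset X Y| + #|` H| < #|` X| + #|` Y|)%N ->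
  (#|` sumset X Y `\` Ce e| + #|` H| < #|` stab (Ce e)|)%N.
Proof.
move=> /[dup] eE /etrans_shiftsP[Ae0 Be0 _] ltXY.
have sKe := stab_fsubgroup (sumset_neq0 Ae0 Be0).
have : (#|` sumset (etransA X Y e) (stab (Ce e))| + #|` sumset (etransB X Y e) (stab (Ce e))|
    <= #|` Ce e| + #|` stab (Ce e)|)%N := IHn Ae0 Be0 (card_etransB_sumset_stab eE).
have := fsubset_leq_card (fsubset_sumsetK (etransA X Y e) sKe).
have := fsubset_leq_card (fsubset_sumsetK (etransB X Y e) sKe).
have := card_etrans X Y e; have := fsubset_leq_card (sumset_etrans_sub X Y e).
rewrite (cardfsDS (sumset_etrans_sub X Y e)).
lia.
Qed.

Lemma kneser_bound_periodic : (#|` X| + #|` Y| <= #|` sumset X Y| + #|` H|)%N.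
Proof.
rewrite leqNgt; apply/negP => ltXY.
have XY0 := sumset_neq0 X0 Y0.
have sKe e : e \in etrans_shifts X Y -> is_fsubgroup (stab (Ce e)).
  by case/etrans_shiftsP => Ae0 Be0 _; apply/stab_fsubgroup/sumset_neq0.
have pKe e : e \in etrans_shifts X Y -> periodic (stab (Ce e)) (Ce e).
  by case/etrans_shiftsP => Ae0 Be0 _; apply/periodic_stab/sumset_neq0.
have [K [sK pK ltK]] := periodic_cover (Cs := fun e => Ce e) (Ks := fun e => stab (Ce e))
  (fun c cXY => etrans_cover cXY ltXY) sKe pKe (fun e _ => sumset_etrans_sub X Y e)
  (fun e eE => etrans_deficit eE ltXY) XY0.
by have := fsubset_leq_card (sub_stab XY0 pK); lia.
Qed.

End KneserStep.

Lemma kneser_step n A B :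
    (forall A B, A != fset0 -> B != fset0 ->
      (#|` sumset B (stab (sumset A B))| <= n * #|` stab (sumset A B)|)%N ->
      kneser_bound A B) ->
    A != fset0 -> B != fset0 ->
    (#|` sumset B (stab (sumset A B))| <= n.+1 * #|` stab (sumset A B)|)%N ->
  kneser_bound A B.
Proof.
move=> IHn A0 B0 cardB; rewrite /kneser_bound.
have sH := stab_fsubgroup (sumset_neq0 A0 B0).
have XY := sumset_sumsetK sH (periodic_stab (sumset_neq0 A0 B0)).
have nonempty Z : Z != fset0 -> sumset Z (stab (sumset A B)) != fset0.
  by move=> Z0; apply: sumset_neq0 => //; apply/fset0Pn; exists 0; apply: fsubgroup0.
rewrite -[in X in (_ <= X)%N]XY.
apply: (kneser_bound_periodic IHn (nonempty _ A0) (nonempty _ B0)); rewrite XY //.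
- exact: periodic_sumsetK.
- exact: periodic_sumsetK.
Qed.

Lemma kneser A B : A != fset0 -> B != fset0 -> kneser_bound A B.
Proof.
move=> A0 B0; have sH := stab_fsubgroup (sumset_neq0 A0 B0).
have [n cardB] : exists n, (#|` sumset B (stab (sumset A B))| <= n * #|` stab (sumset A B)|)%N.
  by exists #|` sumset B (stab (sumset A B))|; rewrite leq_pmulr // fsubgroup_card_gt0.
elim: n A B A0 B0 sH cardB => [|n IHn] A B A0 B0 sH cardB.
  have [b bB] := fset0Pn _ B0; have := mem_sumset bB (fsubgroup0 sH).
  by move: cardB; rewrite mul0n leqn0 cardfs_eq0 => /eqP ->; rewrite in_fset0.
apply: kneser_step A0 B0 cardB => A' B' A'0 B'0.
exact/IHn/stab_fsubgroup/sumset_neq0.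
Qed.

Lemma card_fcosetI_sumset H X Y x : is_fsubgroup H -> x \in X -> X `<=` Y ->
  (#|` H| + #|` X| <= #|` fcoset x H `&` Y| + #|` sumset X H|)%N.
Proof.
move=> sH xX sXY.
have sXH := fsubset_sumsetK X sH.
have out : fcoset x H `\` X `<=` sumset X H `\` X.
  apply/fsetSD/fsubsetP => z; rewrite in_fcoset => zxH.
  by rewrite -(subrKC x z) mem_sumset.
have := fsubset_leq_card sXH; have := fsubset_leq_card out.
have := fsubset_leq_card (fsetIS (fcoset x H) sXY).
rewrite (cardfsDS sXH) -(card_fcoset x H) -(cardfsID X (fcoset x H)); lia.
Qed.

End Kneser.

Theorem proposition2p3 (G : zmodType) (A B : {fset G}) :
  A != fset0 -> B != fset0 ->
  (forall H : {fset G}, is_fsubgroup H -> (1 < #|` H|)%N ->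
     forall a b : G,
       (#|` (fcoset a H `&` A)| + #|` (fcoset b H `&` B)| <= #|` H| + 1)%N) ->
  forall S T : {fset G}, S != fset0 -> T != fset0 ->
    S `<=` A -> T `<=` B ->
    (#|` S| + #|` T| - 1 <= #|` sumset S T|)%N.
Proof.
move=> _ _ hypAB S T S0 T0 sSA sTB.
have kn := kneser S0 T0; rewrite /kneser_bound in kn.
set H := stab (sumset S T) in kn.
have sH : is_fsubgroup H := stab_fsubgroup (sumset_neq0 S0 T0).
have leS := fsubset_leq_card (fsubset_sumsetK S sH).
have leT := fsubset_leq_card (fsubset_sumsetK T sH).
have [leH1|ltH1] := leqP #|` H| 1; first by lia.
have [s sS] := fset0Pn _ S0; have [t tT] := fset0Pn _ T0.
have := card_fcosetI_sumset sH sS sSA; have := card_fcosetI_sumset sH tT sTB.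
have := hypAB H sH ltH1 s t; lia.
Qed.
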